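(* Let $R$ be an irreducible root system spanning a rational vector space $L$, with Weyl group $W(R)$. Then ${\rm rk}(R)+1\leqslant{\rm sep}(R)\leqslant|W(R)|$.
   Context: For $l\in L^*$ put $l^+=\{x\in L\mid l(x)\geqslant0\}$ and $l^0=\{x\in L\mid l(x)=0\}$. The separation index ${\rm sep}(R)$ is the minimal length $n$ of a sequence $C_1,\ldots,C_n$ of Weyl chambers of $R$ such that for every nonzero $l\in L^*$ there is $i\in[1,n]$ with $\overline{C_i}\subset l^+$ and $\overline{C_i}\cap l^0=\{0\}$ (closures taken in $L$). *)

(* L = 'rV[rat]_n (a rational vector space of dimension n),
   L^* is identified with 'rV[rat]_n via l(x) = x *m l^T. *)
From HB Require Import structures.
From mathcomp Require Import all_boot all_order all_algebra.
Set Implicit Arguments. Unset Strict Implicit. Unset Printing Implicit Defensive.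
Import Order.TTheory GRing.Theory Num.Theory.
Local Open Scope ring_scope.

Section RootSystems.
Variable n : nat.
Notation vec := 'rV[rat]_n.

Definition pair (x l : vec) : rat := (x *m l^T) 0 0.

(* reflection s_a x = x - a^v(x) a, as a matrix acting on row vectors *)
Definition refl_mx (a av : vec) : 'M[rat]_n := 1%:M - av^T *m a.

(* Bourbaki's definition of a (possibly non-reduced) root system in L,
   with coroot map cor : a |-> a^v in L^*. *)
Definition root_system (R : seq vec) (cor : vec -> vec) : Prop :=
  [/\ 0 \notin R,
      \rank (\matrix_(i < size R) R`_i) = n,
      forall a, a \in R -> pair a (cor a) = 2,
      forall a b, a \in R -> b \in R -> b *m refl_mx a (cor a) \in R &
      forall a b, a \in R -> b \in R -> exists z : int, pair b (cor a) = z%:~R].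

Definition irreducible_rs (R : seq vec) (cor : vec -> vec) : Prop :=
  R != [::] /\
  forall P : vec -> bool,
    (forall a b, a \in R -> b \in R -> P a -> ~~ P b -> pair b (cor a) = 0) ->
    (forall a, a \in R -> P a) \/ (forall a, a \in R -> ~~ P a).

Inductive in_weyl (R : seq vec) (cor : vec -> vec) : 'M[rat]_n -> Prop :=
  | weyl1 : in_weyl R cor 1%:M
  | weylS a w : a \in R -> in_weyl R cor w ->
                in_weyl R cor (w *m refl_mx a (cor a)).

Definition enumerates_weyl (R : seq vec) (cor : vec -> vec) (ws : seq 'M[rat]_n)
  : Prop := uniq ws /\ forall w, in_weyl R cor w <-> w \in ws.

Definition regular (R : seq vec) (cor : vec -> vec) (x0 : vec) : Prop :=
  forall a, a \in R -> pair x0 (cor a) != 0.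

(* Weyl chamber containing a regular point x0: the connected component of
   L minus the union of the hyperplanes ker a^v containing x0, i.e. the open
   cone of points having the same signs as x0 on all coroots *)
Definition chamber (R : seq vec) (cor : vec -> vec) (x0 : vec) : vec -> Prop :=
  fun x => forall a, a \in R -> Num.sg (pair x (cor a)) = Num.sg (pair x0 (cor a)).

Definition closure_L (C : vec -> Prop) : vec -> Prop :=
  fun x => forall e : rat, 0 < e ->
    exists2 y, C y & forall i : 'I_n, `|x 0 i - y 0 i| < e.

(* a sequence of Weyl chambers (given by regular representatives) separating
   all nonzero linear forms *)
Definition separating (R : seq vec) (cor : vec -> vec) (xs : seq vec) : Prop :=
  (forall x0, x0 \in xs -> regular R cor x0) /\
  forall l : vec, l != 0 ->
    exists2 x0, x0 \in xs &
      (forall x, closure_L (chamber R cor x0) x -> 0 <= pair x l) /\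
      (forall x, closure_L (chamber R cor x0) x -> pair x l = 0 -> x = 0).

Definition is_sep (R : seq vec) (cor : vec -> vec) (m : nat) : Prop :=
  (exists2 xs, separating R cor xs & size xs = m) /\
  forall xs, separating R cor xs -> (m <= size xs)%N.

End RootSystems.

From mathcomp Require Import all_boot all_order all_algebra.
From mathcomp Require Import boolp ring lra.
Set Implicit Arguments. Unset Strict Implicit. Unset Printing Implicit Defensive.
Import Order.TTheory GRing.Theory Num.Theory.
Local Open Scope ring_scope.

(* Averaging the dot product over the finite group W(R) gives a W-invariant
   inner product ( , ), for which a^v(x) = 2 (a, x) / (a, a).  Hence W permutes
   the regular points, and maximizing (x w, y) over w in W shows that every
   chamber is a W-translate of a fixed one.

   Every nonzero l in L^* can be written l = sum_a a^v(v) a^v, i.e.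
   l(x) = sum_a a^v(x) a^v(v), with v <> 0.  On the closure of a chamber on which
   every a^v with a^v(v) <> 0 has the sign of a^v(v) (a regular perturbation of
   v), all summands are nonnegative; if they all vanish, x is killed by every
   coroot not vanishing at v, which by irreducibility forces x = 0.  So the
   |W(R)| chambers separate all l, and sep(R) <= |W(R)|.

   Conversely, given regular x_1, ..., x_k with k <= rk(R), some l <> 0 has
   l(x_i) <= 0 for all i.  If the chamber of x_i separated l, then since x_i
   lies in its closure, l(x_i) = 0 would force x_i = 0, which is not regular. *)

Section Signs.
Variable F : realDomainType.
Implicit Types p q r d : F.

Lemma sgr_mulr_ge0 p q r : Num.sg q = Num.sg r -> (0 <= p * q) = (0 <= p * r).
Proof. by move=> sgqr; rewrite -sgr_ge0 sgrM sgqr -sgrM sgr_ge0. Qed.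

Lemma sgr_eq_mul_ge0 p q : Num.sg p = Num.sg q -> 0 <= p * q.
Proof. by move=> sgpq; rewrite -(sgr_mulr_ge0 p sgpq) -expr2 sqr_ge0. Qed.

Lemma mul_gt0_sgr_eq p q : 0 < p * q -> Num.sg p = Num.sg q.
Proof. by move/gtr0_sg/eqP; rewrite sgrM mulr_sg_eq1 => /andP[_ /eqP]. Qed.

Lemma sgrD_small p d : `|d| < `|p| -> Num.sg (p + d) = Num.sg p.
Proof.
move=> dp; apply/esym/mul_gt0_sgr_eq.
have pd : - (p * d) <= `|p| * `|d| by rewrite -normrM -normrN ler_norm.
have p0 : 0 < `|p| by apply: le_lt_trans dp.
have : `|p| * `|d| < `|p| * `|p| by rewrite ltr_pM2l.
have -> : `|p| * `|p| = p * p by rewrite -normrM -expr2 ger0_norm ?sqr_ge0.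
nra.
Qed.

End Signs.

Lemma exists_pos_lt (F : realFieldType) (s : seq F) : (forall c, c \in s -> 0 < c) ->
  exists2 e, 0 < e & forall c, c \in s -> e < c.
Proof.
elim: s => [|c s IH] s0; first by exists 1.
have [e e0 es] := IH (fun c' cs => s0 c' (predU1r _ _ cs)).
have c0 : 0 < c := s0 c (mem_head c s).
exists (Order.min e (c / 2)) => [|c']; first by rewrite lt_min e0 divr_gt0.
rewrite inE gt_min => /predU1P[->|/es ->//]; apply/orP; right; lra.
Qed.

Lemma exists_argmax (d : Order.disp_t) (T : eqType) (F : orderType d)
    (f : T -> F) (s : seq T) :
  s != [::] -> exists2 t, t \in s & forall t', t' \in s -> (f t' <= f t)%O.
Proof.
elim: s => [//|x s IH] _; have [->|s0] := eqVneq s [::].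
  by exists x; rewrite ?mem_head // => t; rewrite inE => /eqP->.
have [t ts tmax] := IH s0; have [xt|tx] := leP (f x) (f t).
  by exists t => [|t']; rewrite inE ?ts ?orbT // => /predU1P[->|/tmax].
exists x => [|t']; rewrite inE ?eqxx // => /predU1P[->//|/tmax ft't].
exact: le_trans ft't (ltW tx).
Qed.

Section Pairing.
Variable n : nat.
Local Notation vec := 'rV[rat]_n.
Implicit Types x y z u v l a av : vec.

Lemma pairE x l : pair x l = \sum_i x 0 i * l 0 i.
Proof. by rewrite /pair !mxE; apply: eq_bigr => i _; rewrite mxE. Qed.

Lemma pairC x l : pair x l = pair l x.
Proof. by rewrite !pairE; apply: eq_bigr => i _; rewrite mulrC. Qed.

Lemma pairDl x y l : pair (x + y) l = pair x l + pair y l.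
Proof. by rewrite !pairE -big_split; apply: eq_bigr => i _; rewrite mxE mulrDl. Qed.

Lemma pairZl c x l : pair (c *: x) l = c * pair x l.
Proof. by rewrite !pairE mulr_sumr; apply: eq_bigr => i _; rewrite mxE mulrA. Qed.

Lemma pairBl x y l : pair (x - y) l = pair x l - pair y l.
Proof. by rewrite pairDl -scaleN1r pairZl mulN1r. Qed.

Lemma pair0r x : pair x 0 = 0.
Proof. by rewrite pairE big1 // => i _; rewrite mxE mulr0. Qed.

Lemma pairDr x u v : pair x (u + v) = pair x u + pair x v.
Proof. by rewrite pairC pairDl !(pairC _ x). Qed.

Lemma pairZr c x l : pair x (c *: l) = c * pair x l.
Proof. by rewrite pairC pairZl pairC. Qed.

Lemma pair_sumr x (I : Type) (r : seq I) (P : pred I) (F : I -> vec) :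
  pair x (\sum_(i <- r | P i) F i) = \sum_(i <- r | P i) pair x (F i).
Proof. exact: (big_morph (pair x) (pairDr x) (pair0r x)). Qed.

Lemma pair_mulmx x u (A : 'M[rat]_n) : pair (x *m A) u = pair x (u *m A^T).
Proof. by rewrite /pair trmx_mul trmxK mulmxA. Qed.

Lemma pair_ge0 x : 0 <= pair x x.
Proof. by rewrite pairE sumr_ge0 // => i _; rewrite -expr2 sqr_ge0. Qed.

Lemma pair_eq0 x : (pair x x == 0) = (x == 0).
Proof.
apply/idP/eqP=> [|->]; last by rewrite pair0r.
rewrite pairE psumr_eq0 => [/allP x0|i _]; last by rewrite -expr2 sqr_ge0.
apply/rowP => i; have := x0 i (mem_index_enum i).
by rewrite mulf_eq0 orbb mxE => /eqP.
Qed.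

Lemma pair_row m (A : 'M[rat]_(m, n)) i l : pair (row i A) l = (A *m l^T) i 0.
Proof. by rewrite /pair -row_mul mxE. Qed.

Lemma refl_mxE x a av : x *m refl_mx a av = x - pair x av *: a.
Proof. by rewrite /refl_mx mulmxBr mulmx1 mulmxA [x *m _]mx11_scalar mul_scalar_mx. Qed.

Lemma refl_mxK a av : pair a av = 2 -> refl_mx a av *m refl_mx a av = 1%:M.
Proof.
move=> aav; have sK x : x *m refl_mx a av *m refl_mx a av = x.
  by rewrite !refl_mxE pairBl pairZl aav; apply/rowP => j; rewrite !mxE; ring.
by apply/row_matrixP => i; rewrite row_mul rowE sK row1.
Qed.

Lemma rv_neq0_dim_gt0 x : x != 0 -> (0 < n)%N.
Proof.
move=> x0; rewrite lt0n; apply: contraNneq x0 => n0; apply/eqP/rowP => i.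
by have := leq_trans (ltn_ord i) (eq_leq n0); rewrite ltn0.
Qed.

Definition seqmx (S : seq vec) : 'M[rat]_(size S, n) := \matrix_(i < size S) S`_i.

Lemma seqmx_sub S a : a \in S -> (a <= seqmx S)%MS.
Proof.
move=> aS; have iS : (index a S < size S)%N by rewrite index_mem.
have <- : row (Ordinal iS) (seqmx S) = a by rewrite rowK nth_index.
exact: row_sub.
Qed.

Lemma pair_seqmx_eq0 S l z : (forall a, a \in S -> pair a l = 0) ->
  (z <= seqmx S)%MS -> pair z l = 0.
Proof.
move=> Sl /submxP[D ->]; have Sl0 : seqmx S *m l^T = 0.
  by apply/colP => i; rewrite -pair_row rowK Sl ?mem_nth ?mxE.
by rewrite /pair -mulmxA Sl0 mulmx0 mxE.
Qed.

Lemma pair_dist_le x z l e : (forall i, `|x 0 i - z 0 i| < e) ->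
  `|pair x l - pair z l| <= e * \sum_i `|l 0 i|.
Proof.
move=> xz; rewrite -pairBl pairE mulr_sumr (le_trans (ler_norm_sum _ _ _)) //.
by apply: ler_sum => i _; rewrite normrM ler_wpM2r // !mxE ltW.
Qed.

Lemma closure_L_sub (C C' : vec -> Prop) x :
  (forall z, C z -> C' z) -> closure_L C x -> closure_L C' x.
Proof. by move=> CC' xC e e0; have [z /CC' ? ?] := xC e e0; exists z. Qed.

Lemma closure_L_refl (C : vec -> Prop) x : C x -> closure_L C x.
Proof. by move=> Cx e e0; exists x => // i; rewrite subrr normr0. Qed.

Lemma closure_pair_ge0 (C : vec -> Prop) l x :
  (forall z, C z -> 0 <= pair z l) -> closure_L C x -> 0 <= pair x l.
Proof.
move=> Cl xC; rewrite leNgt; apply/negP => xl.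
set S : rat := \sum_i `|l 0 i|; have S0 : 0 <= S by rewrite sumr_ge0.
set e : rat := - pair x l / (S + 1).
have e0 : 0 < e by rewrite divr_gt0 ?oppr_gt0 // ltr_wpDl.
have eS : e * S < - pair x l.
  by rewrite -[X in _ < X](@divfK _ (S + 1)) ?lt0r_neq0 ?ltr_wpDl // ltr_pM2l // ltrDl.
have [z zC xz] := xC e e0; have := Cl z zC.
move: (pair_dist_le l xz); rewrite -/S distrC ler_distl => /andP[_]; lra.
Qed.

Lemma perturb_sgr (fs : seq vec) v u : exists2 e, 0 < e & forall f, f \in fs ->
  pair v f != 0 -> Num.sg (pair (v + e *: u) f) = Num.sg (pair v f).
Proof.
pose bound f := `|pair v f| / (`|pair u f| + 1).
have [|e e0 ebound] := @exists_pos_lt _ [seq bound f | f <- fs & pair v f != 0].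
  move=> c /mapP[f]; rewrite mem_filter => /andP[vf _] ->.
  by rewrite divr_gt0 ?normr_gt0 ?ltr_wpDl.
exists e => // f ffs vf; rewrite pairDl pairZl sgrD_small // normrM gtr0_norm //.
have := ebound (bound f) (map_f _ _); rewrite mem_filter vf ffs => /(_ isT).
rewrite ltr_pdivlMr ?ltr_wpDl // mulrDr mulr1; lra.
Qed.

Lemma exists_nonvanishing (fs : seq vec) : (forall f, f \in fs -> f != 0) ->
  exists u, forall f, f \in fs -> pair u f != 0.
Proof.
elim: fs => [|f fs IH] fs0; first by exists 0.
have [u ufs] := IH (fun g gfs => fs0 g (predU1r _ _ gfs)).
have [uf|uf] := eqVneq (pair u f) 0; last first.
  by exists u => g; rewrite inE => /predU1P[->|/ufs].
have [e e0 esg] := perturb_sgr fs u f.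
exists (u + e *: f) => g; rewrite inE => /predU1P[->|gfs].
  by rewrite pairDl uf add0r pairZl mulf_neq0 ?(gt_eqF e0) // pair_eq0 fs0 ?mem_head.
by rewrite -(@sgr_eq0 _ (pair _ g)) esg ?ufs // sgr_eq0 ufs.
Qed.

Lemma exists_nonvanishing_near (fs : seq vec) v : (forall f, f \in fs -> f != 0) ->
  exists y, (forall f, f \in fs -> pair y f != 0) /\
    forall f, f \in fs -> pair v f != 0 -> Num.sg (pair y f) = Num.sg (pair v f).
Proof.
move=> fs0; have [u ufs] := exists_nonvanishing fs0.
have [e e0 esg] := perturb_sgr fs v u.
exists (v + e *: u); split=> [f ffs|]; last exact: esg.
have [vf|vf] := eqVneq (pair v f) 0.
  by rewrite pairDl vf add0r pairZl mulf_neq0 ?(gt_eqF e0) ?ufs.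
by rewrite -(@sgr_eq0 _ (pair _ f)) esg // sgr_eq0.
Qed.

Lemma exists_nonpos_form (xs : seq vec) : (0 < n)%N -> (size xs <= n)%N ->
  exists2 l, l != 0 & forall x, x \in xs -> pair x l <= 0.
Proof.
move=> n0 xsn; pose X : 'M[rat]_n := \matrix_(i < n) xs`_i.
have [l l0 Xl] : exists2 l : vec, l != 0 & forall i, (X *m l^T) i 0 <= 0.
  have [/eqP/det0P[l l0 lX]|detX] := eqVneq (\det X^T) 0.
    exists l => // i; have -> : X *m l^T = (l *m X^T)^T by rewrite trmx_mul trmxK.
    by rewrite lX trmx0 mxE.
  have Xu : X \in unitmx by rewrite -unitmx_tr unitmxE unitfE.
  pose c : 'cV[rat]_n := const_mx (-1).
  have Xc : X *m (invmx X *m c) = c by rewrite mulKVmx.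
  exists (invmx X *m c)^T => [|i]; last by rewrite trmxK Xc mxE lerN10.
  apply/eqP => c0; move/matrixP: Xc => /(_ (Ordinal n0) 0)/eqP.
  by rewrite -[invmx X *m c]trmxK c0 trmx0 mulmx0 !mxE eq_sym oppr_eq0 oner_eq0.
exists l => // x xxs.
have ix : (index x xs < n)%N by apply: leq_trans xsn; rewrite index_mem.
have <- : row (Ordinal ix) X = x by rewrite rowK nth_index.
by rewrite pair_row.
Qed.

End Pairing.

Section RootSystem.
Variables (n : nat) (R : seq 'rV[rat]_n) (cor : 'rV[rat]_n -> 'rV[rat]_n).
Hypothesis rsR : root_system R cor.
Local Notation vec := 'rV[rat]_n.
Local Notation refl a := (refl_mx a (cor a)).
Implicit Types (a b x y z v l : vec) (w : 'M[rat]_n).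

Lemma root_neq0 a : a \in R -> a != 0.
Proof. by case: rsR => R0 _ _ _ _ aR; apply: contraNneq R0 => <-. Qed.

Lemma roots_full : row_full (seqmx R).
Proof. by case: rsR => _ rkR _ _ _; rewrite /row_full rkR. Qed.

Lemma pair_coroot a : a \in R -> pair a (cor a) = 2.
Proof. by case: rsR => _ _ aa _ _; apply: aa. Qed.

Lemma refl_root a b : a \in R -> b \in R -> b *m refl a \in R.
Proof. by case: rsR => _ _ _ ab _; apply: ab. Qed.

Lemma reflK a : a \in R -> refl a *m refl a = 1%:M.
Proof. by move=> aR; rewrite refl_mxK ?pair_coroot. Qed.

Lemma coroot_neq0 a : a \in R -> cor a != 0.
Proof.
by move=> aR; apply/eqP => a0; have := pair_coroot aR; rewrite a0 pair0r => /esym/eqP.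
Qed.

Lemma pair_roots_eq0 l : (forall a, a \in R -> pair a l = 0) -> l = 0.
Proof.
by move=> Rl; apply/eqP; rewrite -pair_eq0 (pair_seqmx_eq0 Rl) ?submx_full ?roots_full.
Qed.

Lemma weyl_root w a : in_weyl R cor w -> a \in R -> a *m w \in R.
Proof.
elim=> [|b w' bR _ IH] aR; first by rewrite mulmx1.
by rewrite mulmxA refl_root ?IH.
Qed.

Lemma weyl_refll b w : b \in R -> in_weyl R cor w -> in_weyl R cor (refl b *m w).
Proof.
move=> bR; elim=> [|a w' aR _ IH]; last by rewrite mulmxA; apply: weylS.
by rewrite mulmx1 -[refl b]mul1mx; apply: weylS => //; apply: weyl1.
Qed.

Lemma exists_enum_weyl : exists ws, enumerates_weyl R cor ws.
Proof.
(* Since the roots span L, w is determined by the roots' images: B is a left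
   inverse of the matrix of roots. *)
have [B BR] := row_fullP roots_full.
pose cands := [seq B *m \matrix_(i < size R) R`_(f i)
                | f : {ffun 'I_(size R) -> 'I_(size R)}].
exists [seq w <- undup cands | `[< in_weyl R cor w >]].
split=> [|w]; first by rewrite filter_uniq ?undup_uniq.
rewrite mem_filter mem_undup; split=> [Ww|/andP[/asboolP //]].
rewrite (asboolT Ww) /=.
have Rw (i : 'I_(size R)) : R`_i *m w \in R by rewrite weyl_root ?mem_nth.
have wR (i : 'I_(size R)) : (index (R`_i *m w) R < size R)%N by rewrite index_mem Rw.
apply/imageP; exists [ffun i => Ordinal (wR i)] => //.
have -> : \matrix_i R`_([ffun i => Ordinal (wR i)] i) = seqmx R *m w.
  by apply/row_matrixP => i; rewrite row_mul !rowK ffunE /= nth_index.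
by rewrite mulmxA BR mul1mx.
Qed.

Lemma exists_regular_near v : exists y, regular R cor y /\ forall a, a \in R ->
  pair v (cor a) != 0 -> Num.sg (pair y (cor a)) = Num.sg (pair v (cor a)).
Proof.
have [|y [yreg ysg]] := @exists_nonvanishing_near _ (map cor R) v.
  by move=> _ /mapP[a aR ->]; apply: coroot_neq0.
by exists y; split=> [a aR|a aR]; [apply: yreg | apply: ysg]; rewrite map_f.
Qed.

Lemma closure_chamber_cone v y x :
  (forall a, a \in R -> pair v (cor a) != 0 ->
     Num.sg (pair y (cor a)) = Num.sg (pair v (cor a))) ->
  closure_L (chamber R cor y) x ->
  forall a, a \in R -> 0 <= pair x (cor a) * pair v (cor a).
Proof.
move=> ysg xcl a aR; rewrite mulrC -pairZr.
apply: (closure_pair_ge0 _ xcl) => z zy; rewrite pairZr mulrC.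
have [->|va] := eqVneq (pair v (cor a)) 0; first by rewrite mulr0.
by apply: sgr_eq_mul_ge0; rewrite zy // ysg.
Qed.

Lemma separating_size_gt xs : R != [::] -> separating R cor xs -> (n < size xs)%N.
Proof.
move=> R0 [xsreg xssep]; rewrite ltnNge; apply/negP => xsn.
have aR : R`_0 \in R by rewrite mem_nth // lt0n size_eq0.
have [l l0 xsl] := exists_nonpos_form (rv_neq0_dim_gt0 (root_neq0 aR)) xsn.
have [x0 x0xs [x0l x0l0]] := xssep l l0.
have x0cl : closure_L (chamber R cor x0) x0 by apply: closure_L_refl => a.
have x00 : x0 = 0 by apply: (x0l0 _ x0cl); apply/le_anti; rewrite xsl // (x0l _ x0cl).
by have := xsreg x0 x0xs _ aR; rewrite x00 pairC pair0r eqxx.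
Qed.

Section InvariantForm.
Variable ws : seq 'M[rat]_n.
Hypothesis wsW : enumerates_weyl R cor ws.

Definition wdot x z := \sum_(w <- ws) pair (x *m w) (z *m w).

Definition weyl_gram : 'M[rat]_n := \sum_(w <- ws) w *m w^T.

Lemma wdotE x z : wdot x z = pair x (z *m weyl_gram).
Proof.
rewrite /weyl_gram mulmx_sumr pair_sumr; apply: eq_bigr => w _.
by rewrite mulmxA pair_mulmx.
Qed.

Lemma wdotC x z : wdot x z = wdot z x.
Proof. by apply: eq_bigr => w _; rewrite pairC. Qed.

Lemma wdotBl x y z : wdot (x - y) z = wdot x z - wdot y z.
Proof. by rewrite !wdotE pairBl. Qed.

Lemma wdotZl c x z : wdot (c *: x) z = c * wdot x z.
Proof. by rewrite !wdotE pairZl. Qed.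

Lemma weyl1_mem : 1%:M \in ws.
Proof. by case: wsW => _ wsE; apply/wsE; apply: weyl1. Qed.

Lemma wdot_gt0 x : x != 0 -> 0 < wdot x x.
Proof.
move=> x0; rewrite /wdot (big_rem _ weyl1_mem) /= !mulmx1 ltr_pwDl //.
  by rewrite lt_def pair_eq0 x0 pair_ge0.
by rewrite sumr_ge0 // => w _; apply: pair_ge0.
Qed.

Lemma wdot_refl b x z : b \in R -> wdot (x *m refl b) (z *m refl b) = wdot x z.
Proof.
move=> bR; case: wsW => wsU wsE.
have sbK : involutive (mulmx (refl b) : 'M_n -> 'M_n).
  by move=> w; rewrite mulmxA reflK ?mul1mx.
have sbW w : (refl b *m w \in ws) = (w \in ws).
  apply/idP/idP => /wsE Ww; apply/wsE; last exact: weyl_refll.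
  by rewrite -(sbK w); apply: weyl_refll.
have ws_perm : perm_eq ws (map (mulmx (refl b)) ws).
  apply: uniq_perm => //; first by rewrite (map_inj_uniq (inv_inj sbK)).
  move=> w; apply/idP/mapP => [ww|[w' w'ws ->]]; last by rewrite sbW.
  by exists (refl b *m w); rewrite ?sbW ?sbK.
rewrite /wdot [RHS](perm_big _ ws_perm) big_map.
by apply: eq_bigr => w _; rewrite !mulmxA.
Qed.

Lemma coroot_wdot a x : a \in R -> pair x (cor a) * wdot a a = 2 * wdot a x.
Proof.
move=> aR; have aK : a *m refl a = (-1) *: a.
  by rewrite refl_mxE pair_coroot //; apply/rowP => j; rewrite !mxE; ring.
have := wdot_refl x a aR; rewrite aK refl_mxE (wdotC _ (_ *: a)) wdotZl.
rewrite wdotC wdotBl wdotZl (wdotC x a); lra.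
Qed.

Lemma sgr_coroot a x : a \in R -> Num.sg (pair x (cor a)) = Num.sg (wdot a x).
Proof.
move=> aR; have aa0 : 0 < wdot a a by rewrite wdot_gt0 ?root_neq0.
have -> : pair x (cor a) = wdot a x * (2 / wdot a a).
  by rewrite mulrA (mulrC _ 2) -coroot_wdot // mulfK ?gt_eqF.
by rewrite sgrM (gtr0_sg (divr_gt0 _ aa0)) ?mulr1.
Qed.

Lemma coroot_eq0 a x : a \in R -> (pair x (cor a) == 0) = (wdot a x == 0).
Proof. by move=> aR; rewrite -sgr_eq0 sgr_coroot // sgr_eq0. Qed.

Lemma coroots_eq0 x : (forall a, a \in R -> pair x (cor a) = 0) -> x = 0.
Proof.
move=> xR; have xG : x *m weyl_gram = 0.
  by apply: pair_roots_eq0 => a aR; rewrite -wdotE; apply/eqP; rewrite -coroot_eq0 ?xR.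
by apply/eqP; have := @wdot_gt0 x; rewrite wdotE xG pair0r ltxx => /contraFT; apply.
Qed.

Lemma regular_refl x b : regular R cor x -> b \in R -> regular R cor (x *m refl b).
Proof.
move=> xreg bR a aR; have abR : a *m refl b \in R by apply: refl_root.
rewrite coroot_eq0 //; have -> : wdot a (x *m refl b) = wdot (a *m refl b) x.
  by rewrite -(wdot_refl _ x bR) -mulmxA reflK // mulmx1.
by rewrite -coroot_eq0 // xreg.
Qed.

Lemma regular_weyl x w : regular R cor x -> in_weyl R cor w -> regular R cor (x *m w).
Proof.
move=> xreg; elim=> [|b w' bR _ IH]; first by rewrite mulmx1.
by rewrite mulmxA; apply: regular_refl.
Qed.

Lemma exists_weyl_same_chamber x y : regular R cor x -> regular R cor y ->
  exists2 w, w \in ws & forall a, a \in R ->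
    Num.sg (pair (x *m w) (cor a)) = Num.sg (pair y (cor a)).
Proof.
move=> xreg yreg; case: wsW => _ wsE.
have ws0 : ws != [::] by apply: contraTneq weyl1_mem => ->.
have [w ww wmax] := exists_argmax (fun w => wdot (x *m w) y) ws0.
exists w => // a aR; apply: mul_gt0_sgr_eq.
have xwreg : regular R cor (x *m w) by apply: regular_weyl => //; apply/wsE.
rewrite lt_def mulf_neq0 ?xwreg ?yreg //= (sgr_mulr_ge0 _ (sgr_coroot y aR)).
have := wmax (w *m refl a); rewrite -wsE => /(_ (weylS aR ((wsE w).2 ww))).
rewrite mulmxA refl_mxE wdotBl wdotZl; lra.
Qed.

Hypothesis irrR : irreducible_rs R cor.

Lemma coroots_nonvanishing_eq0 v x : v != 0 ->
  (forall a, a \in R -> pair v (cor a) != 0 -> pair x (cor a) = 0) -> x = 0.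
Proof.
(* U is spanned by the roots not orthogonal to v.  A root a outside U is
   orthogonal to v, so s_a maps these generators to generators; hence
   a^v(b) a = b - b s_a lies in U and a^v vanishes on U.  Irreducibility then
   puts every root in U. *)
move=> v0 xv; pose U := seqmx [seq a <- R | wdot a v != 0].
have inU a : a \in R -> wdot a v != 0 -> (a <= U)%MS.
  by move=> aR av; apply: seqmx_sub; rewrite mem_filter av.
have Uorth a : a \in R -> ~~ (a <= U)%MS -> forall z, (z <= U)%MS -> pair z (cor a) = 0.
  move=> aR aU z; apply: pair_seqmx_eq0 => b; rewrite mem_filter => /andP[bv bR].
  have av : wdot a v = 0 by apply/eqP; apply: contraR aU; apply: inU.
  have bsU : (b *m refl a <= U)%MS.
    by rewrite inU ?refl_root // refl_mxE wdotBl wdotZl av mulr0 subr0.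
  have : (pair b (cor a) *: a <= U)%MS.
    have -> : pair b (cor a) *: a = b - b *m refl a by rewrite refl_mxE opprB addrC subrK.
    by apply: addmx_sub; [apply: inU | rewrite eqmx_opp].
  have [//|ba0] := eqVneq (pair b (cor a)) 0.
  by rewrite (eqmx_scale _ ba0) (negbTE aU).
case: irrR => _ irr.
have [outU|inUR] := irr (fun a => ~~ (a <= U)%MS)
  (fun a b aR bR aU bU => Uorth a aR aU b (negbNE bU)).
  case/negP: v0; apply/eqP; apply: coroots_eq0 => a aR; apply/eqP.
  by rewrite coroot_eq0 //; apply: contraR (outU a aR); apply: inU.
have xR b : b \in R -> wdot b v != 0 -> pair b (x *m weyl_gram) = 0.
  by move=> bR bv; rewrite -wdotE; apply/eqP; rewrite -coroot_eq0 // xv // coroot_eq0.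
apply: coroots_eq0 => a aR; apply/eqP; rewrite coroot_eq0 // wdotE; apply/eqP.
apply: pair_seqmx_eq0 (negbNE (inUR a aR)) => b.
by rewrite mem_filter => /andP[bv /xR]; apply.
Qed.

Definition coroot_gram : 'M[rat]_n := \sum_(a <- R) (cor a)^T *m cor a.

Lemma pair_coroot_gram x v :
  pair x (v *m coroot_gram) = \sum_(a <- R) pair x (cor a) * pair v (cor a).
Proof.
rewrite mulmx_sumr pair_sumr; apply: eq_bigr => a _.
by rewrite mulmxA [v *m _]mx11_scalar mul_scalar_mx pairZr mulrC.
Qed.

Lemma coroot_gram_unit : coroot_gram \in unitmx.
Proof.
rewrite -row_free_unit; apply/inj_row_free => v vC; apply: coroots_eq0 => a aR.
have : pair v (v *m coroot_gram) = 0 by rewrite vC pair0r.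
rewrite pair_coroot_gram big_seq => /eqP; rewrite psumr_eq0 => [/allP/(_ a aR)|b _].
  by rewrite aR mulf_eq0 orbb => /eqP.
by rewrite -expr2 sqr_ge0.
Qed.

Lemma exists_separating_chamber l : l != 0 -> exists y, regular R cor y /\
  forall x, closure_L (chamber R cor y) x -> 0 <= pair x l /\ (pair x l = 0 -> x = 0).
Proof.
move=> l0; set v := l *m invmx coroot_gram.
have lE : l = v *m coroot_gram by rewrite mulmxKV ?coroot_gram_unit.
have v0 : v != 0 by apply: contraNneq l0 => v0; rewrite lE v0 mul0mx.
have [y [yreg ysg]] := exists_regular_near v.
exists y; split=> // x xcl; have xv := closure_chamber_cone ysg xcl.
rewrite lE pair_coroot_gram big_seq; split=> [|/eqP]; first exact: sumr_ge0.
rewrite psumr_eq0 // => /allP x0; apply: (coroots_nonvanishing_eq0 v0) => a aR va.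
by have := implyP (x0 a aR) aR; rewrite mulf_eq0 (negbTE va) orbF => /eqP.
Qed.

Lemma separating_weyl_orbit x0 : regular R cor x0 -> separating R cor (map (mulmx x0) ws).
Proof.
move=> x0reg; case: wsW => _ wsE; split=> [_ /mapP[w ww ->]|l l0].
  by apply: regular_weyl => //; apply/wsE.
have [y [yreg ysep]] := exists_separating_chamber l0.
have [w ww wy] := exists_weyl_same_chamber x0reg yreg.
have clw x : closure_L (chamber R cor (x0 *m w)) x -> closure_L (chamber R cor y) x.
  by apply: closure_L_sub => z zw a aR; rewrite zw // wy.
by exists (x0 *m w); [apply: map_f | split=> x /clw /ysep[]].
Qed.

End InvariantForm.

End RootSystem.

(* rk(R) = n = dim L since R spans L = 'rV[rat]_n *)
Theorem lemma5 (n : nat) (R : seq 'rV[rat]_n) (cor : 'rV[rat]_n -> 'rV[rat]_n) :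
  root_system R cor -> irreducible_rs R cor ->
  exists (m : nat) (ws : seq 'M[rat]_n),
    [/\ is_sep R cor m, enumerates_weyl R cor ws & (n.+1 <= m <= size ws)%N].
Proof.
move=> rsR irrR; have [ws wsW] := exists_enum_weyl rsR.
have [x0 [x0reg _]] := exists_regular_near rsR 0.
have sepW := separating_weyl_orbit rsR wsW irrR x0reg.
have sepP : exists m, `[< exists2 xs, separating R cor xs & size xs = m >].
  by exists (size ws); apply/asboolP; exists (map (mulmx x0) ws); rewrite ?size_map.
case: (ex_minnP sepP) => _ /asboolP[xs sepxs <-] minxs.
have xs_min ys : separating R cor ys -> (size xs <= size ys)%N.
  by move=> sepys; apply: minxs; apply/asboolP; exists ys.
exists (size xs), ws; split=> //; first by split=> //; exists xs.
rewrite (separating_size_gt rsR _ sepxs) /=; last by case: irrR.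
by rewrite -(size_map (mulmx x0) ws) xs_min.
Qed.
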